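(* Let $R$ be a Prüfer domain of finite Krull dimension. Then $R$ is radically finite if and only if $R$ is a Dedekind domain whose ideal class group is a torsion group.
   Context: All rings are commutative with identity. An ideal $I$ of $R$ is called radically perfect if $\mathrm{ht}(I)=\inf\{n \mid \sqrt{I}=\sqrt{(\theta_1,\dots,\theta_n)} \text{ for some } \theta_1,\dots,\theta_n\in R\}$, and moreover, if $\mathrm{ht}(I)=0$, then $\sqrt{I}=\sqrt{(\theta)}$ for some zero divisor $\theta$ of $R$. A ring $R$ is called radically finite if every prime ideal $P$ of $R$ is radically perfect and, in addition, the set of ideals of $R$ that are generated by $\mathrm{ht}(P)$ elements and have radical $P$ has a maximal member $A$ such that there are only finitely many ideals in any chain of ideals between $A$ and $P$. *)

From HB Require Import structures.
From mathcomp Require Import all_boot all_order all_algebra.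
From mathcomp Require Import fraction.
From mathcomp Require Import boolp classical_sets cardinality.
Set Implicit Arguments. Unset Strict Implicit. Unset Printing Implicit Defensive.
Import Order.TTheory GRing.Theory Num.Theory.
Local Open Scope classical_set_scope.
Local Open Scope ring_scope.

Section RingIdeals.
Variable R : idomainType.

Definition is_ideal (I : set R) : Prop :=
  I 0 /\ (forall x y, I x -> I y -> I (x + y)) /\ (forall r x, I x -> I (r * x)).

Definition is_prime_ideal (P : set R) : Prop :=
  is_ideal P /\ ~ P 1 /\ (forall a b, P (a * b) -> P a \/ P b).

Definition span (s : seq R) : set R :=
  [set x | exists c : 'I_(size s) -> R, x = \sum_(i < size s) c i * s`_i].

Definition rad (I : set R) : set R := [set x | exists n : nat, I (x ^+ n)].

Definition zero_divisor (t : R) : Prop := exists y : R, y != 0 /\ t * y = 0.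

Definition prime_chain (p : nat -> set R) (n : nat) : Prop :=
  (forall i, (i <= n)%N -> is_prime_ideal (p i)) /\
  (forall i, (i < n)%N -> p i `<` p i.+1).

Definition prime_height (P : set R) (n : nat) : Prop :=
  (exists p, prime_chain p n /\ p n = P) /\
  (forall p m, prime_chain p m -> p m = P -> (m <= n)%N).

Definition ideal_height (I : set R) (n : nat) : Prop :=
  (exists P, is_prime_ideal P /\ I `<=` P /\ prime_height P n) /\
  (forall P m, is_prime_ideal P -> I `<=` P -> prime_height P m -> (n <= m)%N).

Definition finite_krull_dim : Prop :=
  exists d : nat, forall p m, prime_chain p m -> (m <= d)%N.

Definition radically_perfect (I : set R) : Prop :=
  exists n : nat, ideal_height I n /\
    (exists s : seq R, size s = n /\ rad I = rad (span s)) /\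
    (forall s : seq R, rad I = rad (span s) -> (n <= size s)%N) /\
    (n = 0%N -> exists t : R, zero_divisor t /\ rad I = rad (span [:: t])).

Definition gen_with_radical (n : nat) (P : set R) : set (set R) :=
  [set A | exists s : seq R, size s = n /\ A = span s /\ rad A = P].

Definition maximal_member (S : set (set R)) (A : set R) : Prop :=
  S A /\ (forall B, S B -> A `<=` B -> B = A).

Definition chains_between_finite (A P : set R) : Prop :=
  forall C : set (set R),
    (forall J, C J -> is_ideal J /\ A `<=` J /\ J `<=` P) ->
    (forall J1 J2, C J1 -> C J2 -> J1 `<=` J2 \/ J2 `<=` J1) ->
    finite_set C.

Definition radically_finite : Prop :=
  forall P : set R, is_prime_ideal P ->
    radically_perfect P /\
    exists n : nat, ideal_height P n /\
      exists A : set R, maximal_member (gen_with_radical n P) A /\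
                        chains_between_finite A P.

(* fractional ideals: R-submodules of the fraction field K *)
Local Notation K := {fraction R}.
Local Notation tof := (@FracField.tofrac R).

Definition Rsubmodule (M : set K) : Prop :=
  M 0 /\ (forall x y, M x -> M y -> M (x + y)) /\ (forall r x, M x -> M (tof r * x)).

Definition mprod (M N : set K) : set K :=
  [set z | exists n : nat, exists a b : 'I_n -> K,
     (forall i, M (a i) /\ N (b i)) /\ z = \sum_(i < n) a i * b i].

Definition Rimg : set K := tof @` setT.

Definition invertible_frac (M : set K) : Prop :=
  Rsubmodule M /\ exists N : set K, Rsubmodule N /\ mprod M N = Rimg.

Definition invertible_ideal (I : set R) : Prop := invertible_frac (tof @` I).

Definition prufer_domain : Prop :=
  forall I : set R, is_ideal I -> I <> [set 0] ->
    (exists s : seq R, I = span s) -> invertible_ideal I.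

Definition dedekind_domain : Prop :=
  forall I : set R, is_ideal I -> I <> [set 0] -> invertible_ideal I.

(* M^(n+1) *)
Definition mpow (M : set K) (n : nat) : set K := iter n (mprod M) M.

Definition principal_frac (M : set K) : Prop :=
  exists x : K, x != 0 /\ M = [set x * tof r | r in [set: R]].

Definition class_group_torsion : Prop :=
  forall M : set K, invertible_frac M -> exists n : nat, principal_frac (mpow M n).

End RingIdeals.

(* If R is Dedekind with torsion class group, every nonzero prime P is maximal
   and some power P^k = (t) is principal; taking k minimal, the ideals between
   (t) and P are exactly the powers P^i with i <= k, so (t) is the required
   maximal member with radical P and every chain above it is finite.
   Conversely, let R be a radically finite Prufer domain.  For primes
   0 <> Q < P and c in P \ Q, the colons A : c^j of the chosen ideal A with
   radical Q stabilise, and the Prufer property then produces t outside P with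
   tA in cA; cancelling the invertible A puts t in (c), a contradiction, so
   nonzero primes are maximal.  For a nonzero prime P with chosen generator t,
   the ideals (t, x), x in P, form a chain, hence P = (t, x) for some x; P is
   then invertible and, as x^n lies in (t), a power of P is principal.  By Zorn,
   an ideal maximal among those without principal power would be prime, so all
   nonzero ideals have principal powers: they are invertible and their classes
   are torsion. *)

From mathcomp Require Import all_boot all_algebra fraction ring.
From mathcomp Require Import boolp classical_sets cardinality.
Set Implicit Arguments. Unset Strict Implicit. Unset Printing Implicit Defensive.
Import GRing.Theory.
Local Open Scope classical_set_scope.
Local Open Scope ring_scope.

Section Chains.
Variable T : Type.
Implicit Types (A B : set T) (F S : set (set T)).

(* Unlike [Zorn_bigcup], only nonempty chains have to be closed under union. *)
Lemma Zorn_bigcup_from S A : S A -> A !=set0 ->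
  (forall F, F `<=` S -> F !=set0 -> total_on F subset -> S (\bigcup_(X in F) X)) ->
  exists M, S M /\ forall B, M `<` B -> ~ S B.
Proof.
move=> SA [a Aa] Schain.
pose S0 := [set X | X = set0 \/ S X].
have [M [S0M Mmax]] : exists M, S0 M /\ forall B, M `<` B -> ~ S0 B.
  apply: Zorn_bigcup => F FS0 Ftot.
  have [[X [FX SX]]|] := pselect (exists X, F X /\ S X).
    right; have -> : \bigcup_(X in F) X = \bigcup_(X in F `&` S) X.
      apply/seteqP; split=> t [Y FY Yt]; last by exists Y => //; case: FY.
      by case: (FS0 Y FY) => [Y0|SY]; [rewrite Y0 in Yt | exists Y].
    apply: Schain; [by move=> ? [] | by exists X | by move=> ? ? [? _] [? _]; apply: Ftot].
  move=> /forallNP FnS; left; apply/seteqP; split=> // t [Y FY Yt].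
  by case: (FS0 Y FY) => [Y0|SY]; [rewrite Y0 in Yt | case: (FnS Y)].
case: S0M => [M0|SM]; last by exists M; split=> // B MB SB; apply: (Mmax B MB); right.
by exfalso; apply: (Mmax A); [rewrite M0; split=> // /(_ a Aa) | right].
Qed.

Lemma strict_chain_infinite (f : nat -> set T) :
  (forall j, f j `<` f j.+1) -> infinite_set (range f).
Proof.
move=> fS.
have proper_trans : forall B A C : set T, A `<` B -> B `<` C -> A `<` C.
  move=> B A C [AB nBA] [BC nCB]; split; first exact: (subset_trans AB BC).
  by move=> CA; apply: nBA; apply: (subset_trans BC CA).
have lt_f := homo_ltn proper_trans fS.
have f_inj : injective f.
  by move=> i j fij; case: (ltngtP i j) => // /lt_f; rewrite fij => /properxx.
move=> frange; case: infinite_nat; rewrite -(preimage_range f).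
by apply: finite_preimage => // i j _ _; apply: f_inj.
Qed.

Lemma nondecreasing_finite_range (f : nat -> set T) :
  (forall j, f j `<=` f j.+1) -> finite_set (range f) -> exists j, f j.+1 `<=` f j.
Proof.
move=> fS frange; apply: contrapT => /forallNP nstable.
by apply: (strict_chain_infinite (f := f)) => // j; split => //; apply: nstable.
Qed.

End Chains.

Lemma bigcup_chain_seq (T : eqType) (F : set (set T)) (s : seq T) :
  F !=set0 -> total_on F subset -> (forall x, x \in s -> (\bigcup_(X in F) X) x) ->
  exists2 X, F X & forall x, x \in s -> X x.
Proof.
move=> [X0 FX0] Ftot; elim: s => [|x s IH] sF; first by exists X0.
have [|X FX Xs] := IH; first by move=> y ys; apply: sF; rewrite inE ys orbT.
have [Y FY Yx] := sF x (mem_head _ _).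
case: (Ftot X Y FX FY) => [XY|YX].
  by exists Y => // y; rewrite inE => /orP [/eqP -> | /Xs /XY].
by exists X => // y; rewrite inE => /orP [/eqP -> | /Xs]; [apply: YX |].
Qed.

Section IdealArithmetic.
Variable R : idomainType.
Implicit Types (I J L X Y : set R) (a b d e x y : R).

Lemma ideal0 I : is_ideal I -> I 0. Proof. by case. Qed.

Lemma idealD I x y : is_ideal I -> I x -> I y -> I (x + y).
Proof. by case=> _ [+ _]; apply. Qed.

Lemma idealMl I a x : is_ideal I -> I x -> I (a * x).
Proof. by case=> _ [_ +]; apply. Qed.

Lemma idealMr I a x : is_ideal I -> I x -> I (x * a).
Proof. by move=> iI Ix; rewrite mulrC; apply: idealMl. Qed.

Lemma ideal_sum I (T : eqType) (s : seq T) (F : T -> R) :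
  is_ideal I -> (forall t, t \in s -> I (F t)) -> I (\sum_(t <- s) F t).
Proof.
move=> iI IF; rewrite big_seq; apply: (big_ind I) => //; first exact: ideal0.
by move=> ? ?; apply: idealD.
Qed.

Lemma ideal1_setT I : is_ideal I -> I 1 -> I = setT.
Proof.
by move=> iI I1; apply/seteqP; split=> // x _; rewrite -[x]mulr1; apply: idealMl.
Qed.

Lemma neq0_subset I J : is_ideal I -> I <> [set 0] -> I `<=` J -> J <> [set 0].
Proof.
move=> iI I0 IJ J0; apply: I0.
by apply/seteqP; split=> [x /IJ | x ->]; [rewrite J0 | apply: ideal0].
Qed.

Lemma ideal_neq0P I : is_ideal I -> I <> [set 0] <-> exists2 x, I x & x != 0.
Proof.
move=> iI; split=> [I0|[x Ix x0] I0]; last by move: x0; rewrite I0 in Ix; rewrite Ix eqxx.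
apply: contrapT => /forall2NP nI; apply: I0; apply/seteqP; split=> [x Ix|_ ->].
  by case: (nI x) => // /negP; rewrite negbK => /eqP.
exact: ideal0.
Qed.

Definition pideal d : set R := [set x | exists r, x = d * r].

Definition imul I J : set R :=
  [set z | exists l : seq (R * R), (forall p, p \in l -> I p.1 /\ J p.2) /\
     z = \sum_(p <- l) p.1 * p.2].

Definition iexp I n := iter n (imul I) setT.

Definition iscale d I : set R := [set z | exists x, I x /\ z = d * x].

Definition icolon I a : set R := [set x | I (a * x)].

Definition iadjoin I a : set R := [set z | exists m r, I m /\ z = m + a * r].

Lemma ideal_pideal d : is_ideal (pideal d).
Proof.
split; first by exists 0; rewrite mulr0.
split; first by move=> x y [a ->] [b ->]; exists (a + b); rewrite mulrDr.
by move=> r x [a ->]; exists (r * a); rewrite mulrCA.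
Qed.

Lemma pidealMr d r : pideal d (d * r). Proof. by exists r. Qed.

Lemma pideal_id d : pideal d d. Proof. by exists 1; rewrite mulr1. Qed.

Lemma pideal1 : pideal 1 = setT.
Proof. by apply/seteqP; split=> // x _; exists x; rewrite mul1r. Qed.

Lemma pideal0 : pideal 0 = [set 0].
Proof.
by apply/seteqP; split=> x; [case=> r ->; rewrite mul0r | move->; exists 0; rewrite mul0r].
Qed.

Lemma ideal_imul I J : is_ideal I -> is_ideal (imul I J).
Proof.
move=> iI; split; first by exists [::]; split => //; rewrite big_nil.
split.
  move=> x y [l1 [H1 ->]] [l2 [H2 ->]]; exists (l1 ++ l2); split; last by rewrite big_cat.
  by move=> p; rewrite mem_cat => /orP[/H1|/H2].
move=> r x [l [H ->]]; exists [seq (r * p.1, p.2) | p <- l]; split.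
  by move=> p /mapP [q /H [Iq Jq] ->] /=; split => //; apply: idealMl.
by rewrite big_map mulr_sumr; apply: eq_bigr => p _; rewrite mulrA.
Qed.

Lemma mem_imul I J a b : I a -> J b -> imul I J (a * b).
Proof.
move=> Ia Jb; exists [:: (a, b)]; split; last by rewrite big_seq1.
by move=> p; rewrite inE => /eqP ->.
Qed.

Lemma imul_least I J L : is_ideal L -> (forall a b, I a -> J b -> L (a * b)) ->
  imul I J `<=` L.
Proof. by move=> iL H z [l [Hl ->]]; apply: ideal_sum => // p /Hl [Ip Jp]; apply: H. Qed.

Lemma imulS I J I' J' : I `<=` I' -> J `<=` J' -> imul I J `<=` imul I' J'.
Proof. by move=> II JJ z [l [Hl ->]]; exists l; split => // p /Hl [? ?]; split; auto. Qed.

Lemma imul_subl I J : is_ideal I -> imul I J `<=` I.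
Proof. by move=> iI; apply: imul_least => // a b Ia _; apply: idealMr. Qed.

Lemma imulC I J : imul I J = imul J I.
Proof.
suff sub I' J' : imul I' J' `<=` imul J' I' by apply/seteqP; split; apply: sub.
move=> z [l [Hl ->]]; exists [seq (p.2, p.1) | p <- l]; split.
  by move=> p /mapP [q /Hl [? ?] ->].
by rewrite big_map; apply: eq_bigr => p _; rewrite mulrC.
Qed.

Lemma imulA_subset I J L : is_ideal I -> is_ideal J -> is_ideal L ->
  imul (imul I J) L `<=` imul I (imul J L).
Proof.
move=> iI iJ iL; apply: imul_least; first exact: ideal_imul.
move=> x y IJx Ly.
have iM : is_ideal [set z | imul I (imul J L) (z * y)].
  split; first by rewrite /= mul0r; apply: ideal0; apply: ideal_imul.
  split; first by move=> a b; rewrite /= mulrDl; apply: idealD; apply: ideal_imul.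
  by move=> r a; rewrite /= -mulrA; apply: idealMl; apply: ideal_imul.
apply: (imul_least iM) IJx => a b Ia Jb; rewrite /= -mulrA.
by apply: mem_imul => //; apply: mem_imul.
Qed.

Lemma imulA I J L : is_ideal I -> is_ideal J -> is_ideal L ->
  imul (imul I J) L = imul I (imul J L).
Proof.
move=> iI iJ iL; apply/seteqP; split; first exact: imulA_subset.
rewrite imulC (imulC J L) (imulC I J) [X in _ `<=` X]imulC.
exact: imulA_subset.
Qed.

Lemma imulCA I J L : is_ideal I -> is_ideal J -> is_ideal L ->
  imul I (imul J L) = imul J (imul I L).
Proof. by move=> iI iJ iL; rewrite -imulA // (imulC I J) imulA. Qed.

Lemma imulACA I J X Y : is_ideal I -> is_ideal J -> is_ideal X -> is_ideal Y ->
  imul (imul I J) (imul X Y) = imul (imul I X) (imul J Y).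
Proof.
move=> iI iJ iX iY.
rewrite imulA ?(imulCA iJ) -?imulA //; exact: ideal_imul.
Qed.

Lemma imulT I : is_ideal I -> imul I setT = I.
Proof.
move=> iI; apply/seteqP; split; first exact: imul_subl.
by move=> x Ix; rewrite -[x]mulr1; apply: mem_imul.
Qed.

Lemma ideal_iscale d I : is_ideal I -> is_ideal (iscale d I).
Proof.
move=> iI; split; first by exists 0; split; [apply: ideal0 | rewrite mulr0].
split; first by move=> x y [a [Ia ->]] [b [Ib ->]]; exists (a + b); split;
  [apply: idealD | rewrite mulrDr].
by move=> r x [a [Ia ->]]; exists (r * a); split; [apply: idealMl | rewrite mulrCA].
Qed.

Lemma imul_pideal d I : is_ideal I -> imul (pideal d) I = iscale d I.
Proof.
move=> iI; apply/seteqP; split.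
  apply: imul_least; first exact: ideal_iscale.
  by move=> a b [r ->] Ib; exists (r * b); split; [apply: idealMl | rewrite mulrA].
by move=> z [x [Ix ->]]; apply: mem_imul => //; apply: pideal_id.
Qed.

Lemma iscale_subset_cancel d I J : d != 0 -> iscale d I `<=` iscale d J -> I `<=` J.
Proof.
move=> d0 IJ x Ix.
have [y [Jy /(mulfI d0) ->]] : iscale d J (d * x) by apply: IJ; exists x.
exact: Jy.
Qed.

Lemma iscale_inj d I J : d != 0 -> iscale d I = iscale d J -> I = J.
Proof.
by move=> d0 IJ; apply/seteqP; split; apply: (iscale_subset_cancel d0); rewrite IJ.
Qed.

Lemma pidealM d e : imul (pideal d) (pideal e) = pideal (d * e).
Proof.
rewrite imul_pideal; last exact: ideal_pideal.
apply/seteqP; split; first by move=> z [x [[r ->] ->]]; exists r; rewrite mulrA.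
by move=> z [r ->]; exists (e * r); split; [exists r | rewrite mulrA].
Qed.

Lemma ideal_icolon I a : is_ideal I -> is_ideal (icolon I a).
Proof.
move=> iI; split; first by rewrite /icolon /= mulr0; apply: ideal0.
split; first by move=> x y; rewrite /icolon /= mulrDr; apply: idealD.
by move=> r x; rewrite /icolon /= mulrCA; apply: idealMl.
Qed.

Lemma subset_icolon I a : is_ideal I -> I `<=` icolon I a.
Proof. by move=> iI x Ix; apply: idealMl. Qed.

Lemma ideal_iadjoin I a : is_ideal I -> is_ideal (iadjoin I a).
Proof.
move=> iI; split; first by exists 0, 0; split; [apply: ideal0 | rewrite !mulr0 addr0].
split.
  move=> x y [m1 [r1 [I1 ->]]] [m2 [r2 [I2 ->]]]; exists (m1 + m2), (r1 + r2).
  by split; [apply: idealD | rewrite mulrDr addrACA].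
move=> s x [m [r [Im ->]]]; exists (s * m), (s * r); split; first exact: idealMl.
by rewrite mulrDr mulrCA.
Qed.

Lemma subset_iadjoin I a : I `<=` iadjoin I a.
Proof. by move=> x Ix; exists x, 0; rewrite mulr0 addr0. Qed.

Lemma iadjoin_id I a : is_ideal I -> iadjoin I a a.
Proof. by move=> iI; exists 0, 1; split; [apply: ideal0 | rewrite mulr1 add0r]. Qed.

Lemma iadjoin_least I a L : is_ideal L -> I `<=` L -> L a -> iadjoin I a `<=` L.
Proof.
by move=> iL IL La z [m [r [Im ->]]]; apply: idealD => //; [apply: IL | apply: idealMr].
Qed.

Lemma iexpS I n : iexp I n.+1 = imul I (iexp I n). Proof. by []. Qed.

Lemma ideal_iexp I n : is_ideal I -> is_ideal (iexp I n).
Proof. by move=> iI; case: n => [|n] //; apply: ideal_imul. Qed.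

Lemma iexp1 I : is_ideal I -> iexp I 1 = I.
Proof. exact: imulT. Qed.

Lemma iexpD I m n : is_ideal I -> iexp I (m + n) = imul (iexp I m) (iexp I n).
Proof.
move=> iI; elim: m => [|m IH]; first by rewrite add0n imulC imulT //; apply: ideal_iexp.
by rewrite addSn !iexpS IH imulA //; apply: ideal_iexp.
Qed.

Lemma iexpM I m n : is_ideal I -> iexp I (m * n) = iexp (iexp I m) n.
Proof.
by move=> iI; elim: n => [|n IH]; rewrite ?muln0 // mulnS iexpD // IH.
Qed.

Lemma iexp_imul I J n : is_ideal I -> is_ideal J ->
  iexp (imul I J) n = imul (iexp I n) (iexp J n).
Proof.
move=> iI iJ; elim: n => [|n IH]; first by rewrite imulT.
by rewrite !iexpS IH imulACA //; apply: ideal_iexp.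
Qed.

Lemma iexp_pideal d n : iexp (pideal d) n = pideal (d ^+ n).
Proof.
by elim: n => [|n IH]; rewrite ?expr0 ?pideal1 // iexpS IH pidealM exprS.
Qed.

Lemma mem_iexp I x n : I x -> iexp I n (x ^+ n).
Proof. by move=> Ix; elim: n => // n IH; rewrite iexpS exprS; apply: mem_imul. Qed.

Lemma iexp_subset I m n : is_ideal I -> (m <= n)%N -> iexp I n `<=` iexp I m.
Proof.
by move=> iI /subnKC <-; rewrite iexpD //; apply: imul_subl; apply: ideal_iexp.
Qed.

Lemma iexp_subset1 I n : is_ideal I -> (0 < n)%N -> iexp I n `<=` I.
Proof. by move=> iI n0; rewrite -{2}(iexp1 iI); apply: iexp_subset. Qed.

Lemma iexp_iadjoin_subset t x k :
  iexp (iadjoin (pideal t) x) k.+1 `<=` iadjoin (pideal t) (x ^+ k.+1).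
Proof.
have itx := ideal_iadjoin x (ideal_pideal t).
elim: k => [|k IH]; first by rewrite iexp1 // expr1.
rewrite iexpS; apply: subset_trans (imulS (@subset_refl _ _) IH) _.
apply: imul_least; first by apply: ideal_iadjoin; apply: ideal_pideal.
move=> _ _ [m1 [r1 [[a1 ->] ->]]] [m2 [r2 [[a2 ->] ->]]].
exists (t * (a1 * (t * a2 + x ^+ k.+1 * r2) + x * r1 * a2)), (r1 * r2).
by split; [apply: pidealMr | rewrite !exprS; ring].
Qed.


Lemma imul_iadjoin_pideal a b J z : is_ideal J -> imul (iadjoin (pideal a) b) J z ->
  exists u v, J u /\ J v /\ z = a * u + b * v.
Proof.
move=> iJ; pose W := [set z | exists u v, J u /\ J v /\ z = a * u + b * v].
have iW : is_ideal W.
  split; first by exists 0, 0; have := ideal0 iJ; rewrite !mulr0 addr0.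
  split=> [_ _ [u1 [v1 [Ju1 [Jv1 ->]]]] [u2 [v2 [Ju2 [Jv2 ->]]]] | r _ [u [v [Ju [Jv ->]]]]].
    by exists (u1 + u2), (v1 + v2); do ![split; first exact: idealD]; ring.
  by exists (r * u), (r * v); do ![split; first exact: idealMl]; ring.
suff : imul (iadjoin (pideal a) b) J `<=` W by apply.
apply: imul_least => // _ w [_ [y [[x ->] ->]]] Jw; exists (x * w), (y * w).
by do ![split; first exact: idealMl]; ring.
Qed.

Lemma ideal_span (s : seq R) : is_ideal (span s).
Proof.
split; first by exists (fun=> 0); rewrite big1 // => i _; rewrite mul0r.
split.
  move=> x y [c1 ->] [c2 ->]; exists (fun i => c1 i + c2 i).
  by rewrite -big_split; apply: eq_bigr => i _; rewrite mulrDl.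
move=> r x [c ->]; exists (fun i => r * c i).
by rewrite mulr_sumr; apply: eq_bigr => i _; rewrite mulrA.
Qed.

Lemma span_least (s : seq R) I : is_ideal I -> (forall x, x \in s -> I x) ->
  span s `<=` I.
Proof.
move=> iI sI x [c ->]; apply: ideal_sum => // i _; apply: idealMl => //.
by apply: sI; apply: mem_nth.
Qed.

Lemma mem_span (s : seq R) x : x \in s -> span s x.
Proof.
move=> xs; have xs' : (index x s < size s)%N by rewrite index_mem.
exists (fun j => (j == Ordinal xs')%:R).
rewrite (bigD1 (Ordinal xs')) //= eqxx mul1r nth_index // big1 ?addr0 //.
by move=> j /negbTE ->; rewrite mul0r.
Qed.

Lemma span_nil : span [::] = [set 0 : R].
Proof.
by apply/seteqP; split=> x; [case=> c -> | move->; exists (fun=> 0)]; rewrite big_ord0.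
Qed.

Lemma span1 a : span [:: a] = pideal a.
Proof.
apply/seteqP; split=> x.
  by case=> c ->; rewrite big_ord1 /=; exists (c ord0); rewrite mulrC.
by case=> r ->; exists (fun=> r); rewrite big_ord1 /= mulrC.
Qed.

Lemma span2 a b : span [:: a; b] = iadjoin (pideal a) b.
Proof.
apply/seteqP; split=> z.
  case=> c ->; rewrite !big_ord_recl big_ord0 addr0 /=.
  exists (a * c ord0), (c (lift ord0 ord0)); split; first exact: pidealMr.
  by rewrite !(mulrC (c _)).
case=> _ [y [[x ->] ->]]; exists (fun i => if i == ord0 then x else y).
by rewrite !big_ord_recl big_ord0 addr0 /= !(mulrC _ a) !(mulrC _ b).
Qed.

End IdealArithmetic.

Lemma ideal_bigcup_chain (R : idomainType) (F : set (set R)) :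
  (forall X, F X -> is_ideal X) -> F !=set0 -> total_on F subset ->
  is_ideal (\bigcup_(X in F) X).
Proof.
move=> Fi [X0 FX0] Ftot; split; first by exists X0 => //; apply: ideal0; apply: Fi.
split; last by move=> r x [X FX Xx]; exists X => //; apply: idealMl => //; apply: Fi.
move=> x y [X FX Xx] [Y FY Yy]; case: (Ftot X Y FX FY) => [XY|YX].
  by exists Y => //; apply: idealD => //; [apply: Fi | apply: XY].
by exists X => //; apply: idealD => //; [apply: Fi | apply: YX].
Qed.

Section Invertible.
Variable R : idomainType.
Implicit Types (I J L X Y : set R) (a d x : R).

(* Invertibility stated inside R; [invertible_fracP] shows it agrees with
   [invertible_ideal] for ideals. *)
Definition invertible I :=
  exists J, is_ideal J /\ exists d, d != 0 /\ imul I J = pideal d.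

Lemma invertible_cancel I X Y : is_ideal I -> invertible I -> is_ideal X -> is_ideal Y ->
  imul I X `<=` imul I Y -> X `<=` Y.
Proof.
move=> iI [J [iJ [d [d0 IJd]]]] iX iY IXY.
have : imul J (imul I X) `<=` imul J (imul I Y) by apply: imulS.
by rewrite -!imulA // (imulC J I) IJd !imul_pideal //; apply: iscale_subset_cancel.
Qed.

Lemma invertible_inj I X Y : is_ideal I -> invertible I -> is_ideal X -> is_ideal Y ->
  imul I X = imul I Y -> X = Y.
Proof.
move=> iI vI iX iY IXY.
by apply/seteqP; split; apply: (invertible_cancel iI vI); rewrite ?IXY.
Qed.

Lemma invertible_dvd I X : is_ideal I -> invertible I -> is_ideal X -> X `<=` I ->
  exists2 D, is_ideal D & imul I D = X.
Proof.
move=> iI [J [iJ [d [d0 IJd]]]] iX XI.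
have iJX : is_ideal (imul J X) by apply: ideal_imul.
have JXd : imul J X = iscale d (icolon (imul J X) d).
  apply/seteqP; split=> [z JXz|_ [x [JXx ->]] //].
  have /(_ z JXz) : imul J X `<=` imul J I by apply: imulS.
  by rewrite imulC IJd => -[r zdr]; exists r; split => //; rewrite /icolon /= -zdr.
have iD : is_ideal (icolon (imul J X) d) by apply: ideal_icolon.
exists (icolon (imul J X) d) => //; apply: (iscale_inj d0).
rewrite -!imul_pideal //; last exact: ideal_imul.
rewrite (imulCA (ideal_pideal d) iI iD) imul_pideal // -JXd -imulA // IJd.
by rewrite imul_pideal.
Qed.

Lemma invertible_neq0 I : is_ideal I -> invertible I -> I <> [set 0].
Proof.
move=> iI [J [iJ [d [d0 IJd]]]] I0.
have : imul I J `<=` [set 0].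
  rewrite I0 -pideal0; apply: imul_least; first exact: ideal_pideal.
  by move=> _ b [r ->] _; rewrite !mul0r; apply: pideal_id.
by rewrite IJd => /(_ d (pideal_id d)) /eqP; rewrite (negbTE d0).
Qed.

Lemma imul_pideal_subset U J X d : is_ideal U -> is_ideal X -> d != 0 ->
  imul U J = pideal d -> imul X J d -> U `<=` X.
Proof.
move=> iU iX d0 UJd XJd x Ux.
have iL : is_ideal (icolon (iscale d X) x) by apply/ideal_icolon/ideal_iscale.
have [y [Xy]] : icolon (iscale d X) x d.
  apply: (imul_least iL) XJd => a b Xa Jb.
  have [r xbr] : pideal d (x * b) by rewrite -UJd; apply: mem_imul.
  by exists (a * r); split; [apply: idealMr | rewrite mulrCA xbr mulrCA].
by rewrite mulrC => /(mulfI d0) ->.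
Qed.

Lemma invertible_bigcup_chain (F : set (set R)) : (forall X, F X -> is_ideal X) ->
  F !=set0 -> total_on F subset -> invertible (\bigcup_(X in F) X) ->
  exists2 X, F X & X = \bigcup_(X in F) X.
Proof.
move=> Fi Fne Ftot [J [iJ [d [d0 UJd]]]].
have [l [Hl dl]] : imul (\bigcup_(X in F) X) J d by rewrite UJd; apply: pideal_id.
have [|X FX Xl] := @bigcup_chain_seq _ _ [seq p.1 | p <- l] Fne Ftot.
  by move=> _ /mapP [p /Hl [Up _] ->].
exists X => //; apply/seteqP; split; first exact: bigcup_sup.
apply: imul_pideal_subset UJd _ => //; [exact: ideal_bigcup_chain | exact: Fi |].
exists l; split=> // p pl; split; last by case: (Hl p pl).
by apply: Xl; apply/mapP; exists p.
Qed.

Lemma iexp_pideal_neq0 I k d : is_ideal I -> I <> [set 0] ->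
  iexp I k = pideal d -> d != 0.
Proof.
move=> iI I0 Ikd; have [x Ix x0] := (ideal_neq0P iI).1 I0.
have [r xkr] : pideal d (x ^+ k) by rewrite -Ikd; apply: mem_iexp.
apply/eqP => d0; move: xkr; rewrite d0 mul0r => /eqP.
by rewrite expf_eq0 (negbTE x0) andbF.
Qed.

Definition principal_power I := exists k, (0 < k)%N /\ exists d, iexp I k = pideal d.

Lemma principal_powerT : principal_power setT.
Proof. by exists 1%N; split=> //; exists 1; rewrite pideal1 iexp1. Qed.

Lemma principal_power_imul I J : is_ideal I -> is_ideal J ->
  principal_power I -> principal_power J -> principal_power (imul I J).
Proof.
move=> iI iJ [k [k0 [d Ikd]]] [m [m0 [e Jme]]].
exists (k * m)%N; split; first by rewrite muln_gt0 k0.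
exists (d ^+ m * e ^+ k).
by rewrite iexp_imul // iexpM // Ikd iexp_pideal mulnC iexpM // Jme iexp_pideal pidealM.
Qed.

Lemma principal_power_invertible I : is_ideal I -> I <> [set 0] ->
  principal_power I -> invertible I.
Proof.
move=> iI I0 [[|k] [// _ [d Ikd]]]; exists (iexp I k); split; first exact: ideal_iexp.
by exists d; split; [apply: iexp_pideal_neq0 Ikd | rewrite -iexpS].
Qed.

End Invertible.

Section PrimeIdeals.
Variable R : idomainType.
Implicit Types (I J L M P Q : set R) (a b e x : R).

Lemma prime_ideal P : is_prime_ideal P -> is_ideal P. Proof. by case. Qed.

Lemma prime_proper P : is_prime_ideal P -> ~ P 1. Proof. by case=> _ []. Qed.

Lemma prime_mul P a b : is_prime_ideal P -> P (a * b) -> P a \/ P b.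
Proof. by case=> _ [_]; apply. Qed.

Lemma prime_mulN P a b : is_prime_ideal P -> ~ P a -> ~ P b -> ~ P (a * b).
Proof. by move=> pP Na Nb /(prime_mul pP) []. Qed.

Lemma prime_exp P x n : is_prime_ideal P -> P (x ^+ n) -> P x.
Proof.
move=> pP; elim: n => [|n IH]; first by rewrite expr0 => /(prime_proper pP).
by rewrite exprS => /(prime_mul pP) [] // /IH.
Qed.

Lemma prime_1B P e : is_prime_ideal P -> P e -> ~ P (1 - e).
Proof.
move=> pP Pe P1e; apply: (prime_proper pP).
by rewrite -(subrK e 1); apply: idealD => //; apply: prime_ideal.
Qed.

Lemma prime_iexp_subset I P n : is_prime_ideal P -> iexp I n `<=` P -> I `<=` P.
Proof. by move=> pP IP x Ix; apply: (prime_exp (n := n) pP); apply/IP/mem_iexp. Qed.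

Lemma prime0 : is_prime_ideal [set 0 : R].
Proof.
split; first by split=> //; split=> [x y -> ->|r x ->]; rewrite ?addr0 ?mulr0.
split; first by move/eqP; rewrite oner_eq0.
by move=> a b /eqP; rewrite mulf_eq0 => /orP [/eqP|/eqP]; [left | right].
Qed.

Lemma subset_rad I : I `<=` rad I.
Proof. by move=> x Ix; exists 1%N; rewrite expr1. Qed.

Lemma rad_subset_prime I P : is_prime_ideal P -> I `<=` P -> rad I `<=` P.
Proof. by move=> pP IP x [n /IP /(prime_exp pP)]. Qed.

Lemma rad_prime P : is_prime_ideal P -> rad P = P.
Proof.
by move=> pP; apply/seteqP; split; [apply: rad_subset_prime | apply: subset_rad].
Qed.

Lemma rad_iexp P n : is_prime_ideal P -> (0 < n)%N -> rad (iexp P n) = P.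
Proof.
move=> pP n0; apply/seteqP; split; last by move=> x Px; exists n; apply: mem_iexp.
by apply: rad_subset_prime => //; apply: iexp_subset1 n0; apply: prime_ideal.
Qed.

Lemma exists_prime_above I : is_ideal I -> ~ I 1 -> exists2 P, is_prime_ideal P & I `<=` P.
Proof.
move=> iI nI1; pose S := [set M | is_ideal M /\ ~ M 1 /\ I `<=` M].
have [M [[iM [nM1 IM]] Mmax]] : exists M, S M /\ forall B, M `<` B -> ~ S B.
  apply: (@Zorn_bigcup_from _ S I); [by split=> //; split | by exists 0; apply: ideal0 |].
  move=> F FS Fne Ftot; split; first by apply: ideal_bigcup_chain => // X /FS [].
  split; first by case=> X /FS [_ []].
  by case: Fne => X FX x Ix; exists X => //; case: (FS X FX) => _ [_]; apply.
exists M => //; split=> //; split=> // a b Mab; apply: contrapT => /not_orP [Ma Mb].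
have adjoin1 c : ~ M c -> iadjoin M c 1.
  move=> Mc; apply: contrapT => nMc1; apply: (Mmax (iadjoin M c)).
    by split; [apply: subset_iadjoin | move/(_ c (iadjoin_id c iM))].
  split; first exact: ideal_iadjoin.
  by split=> //; apply: subset_trans IM (@subset_iadjoin _ _ _).
have [m1 [r1 [M1 E1]]] := adjoin1 a Ma; have [m2 [r2 [M2 E2]]] := adjoin1 b Mb.
apply: nM1; rewrite -[1]mul1r {1}E1 E2.
have -> : (m1 + a * r1) * (m2 + b * r2) =
    m1 * (m2 + b * r2) + m2 * (a * r1) + (a * b) * (r1 * r2) by ring.
by apply: idealD => //; [apply: idealD => // | ]; apply: idealMr.
Qed.

Lemma prime_common_multiplier P (T : set R) (s : seq R) :
  is_prime_ideal P -> is_ideal T -> (forall a, a \in s -> exists w, ~ P w /\ T (w * a)) ->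
  exists t, ~ P t /\ forall a, a \in s -> T (t * a).
Proof.
move=> pP iT; elim: s => [|a s IH] sT; first by exists 1; split=> //; apply: prime_proper.
have [|t [Pt st]] := IH; first by move=> b bs; apply: sT; rewrite inE bs orbT.
have [w [Pw Twa]] := sT a (mem_head _ _).
exists (w * t); split; first exact: prime_mulN.
move=> b; rewrite inE => /orP [/eqP -> | bs]; first by rewrite mulrAC; apply: idealMr.
by rewrite -mulrA; apply: idealMl => //; apply: st.
Qed.


Lemma icolon_exp_stable (A : set R) Q c :
  is_ideal A -> is_prime_ideal Q -> A `<=` Q -> ~ Q c -> chains_between_finite A Q ->
  exists j, icolon A (c ^+ j.+1) `<=` icolon A (c ^+ j).
Proof.
move=> iA pQ AQ Qc chA; pose f j := icolon A (c ^+ j).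
have fS j : f j `<=` f j.+1 by move=> x; rewrite /f /icolon /= exprS -mulrA; apply: idealMl.
have f_homo := homo_leq (@subset_refl _) (fun _ _ _ => @subset_trans _ _ _ _) fS.
apply: (nondecreasing_finite_range fS); apply: chA.
  move=> _ [i _ <-]; split; first exact: ideal_icolon.
  split; first exact: subset_icolon.
  by move=> x /AQ /(prime_mul pQ) [/(prime_exp pQ) | //].
by move=> _ _ [i _ <-] [k _ <-]; case: (leqP i k) => [/f_homo|/ltnW /f_homo]; [left|right].
Qed.


End PrimeIdeals.

Section DimensionOne.
Variable R : idomainType.
Implicit Types (I L M P Q : set R).

Definition dim_le1 := forall Q P, is_prime_ideal Q -> is_prime_ideal P ->
  Q <> [set 0] -> ~ Q `<` P.

Lemma ideal_height_uniq I n m : ideal_height I n -> ideal_height I m -> n = m.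
Proof.
move=> [[P [pP [IP hP]]] minn] [[P' [pP' [IP' hP']]] minm].
by apply/eqP; rewrite eqn_leq (minn _ _ pP' IP' hP') (minm _ _ pP IP hP).
Qed.

Lemma ideal_height0 : ideal_height [set 0 : R] 0.
Proof.
split=> //; exists [set 0]; split; first exact: prime0.
split=> //; split.
  by exists (fun=> [set 0]); split=> //; split=> // i _; apply: prime0.
move=> p [|m] // [pr ch] pm; exfalso; have [_] := ch m (ltnSn m); rewrite pm; apply.
by move=> x ->; apply: ideal0; apply: prime_ideal; apply: pr.
Qed.

Lemma prime_chain01 P : is_prime_ideal P -> P <> [set 0] ->
  prime_chain (fun i => if i == 0%N then [set 0] else P) 1.
Proof.
move=> pP P0; split; first by case=> [|[|]] //= _; apply: prime0.
case=> // _ /=; split; first by move=> x ->; apply: ideal0; apply: prime_ideal.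
by move=> P_0; apply: P0; apply/seteqP; split=> // x ->; apply: ideal0; apply: prime_ideal.
Qed.

Hypothesis dim1 : dim_le1.

Lemma dim_le1_maximal P M : is_prime_ideal P -> P <> [set 0] ->
  is_prime_ideal M -> P `<=` M -> M `<=` P.
Proof.
by move=> pP P0 pM PM; apply: contrapT => MP; exact: (dim1 pP pM P0 (conj PM MP)).
Qed.

Lemma dim_le1_height P : is_prime_ideal P -> P <> [set 0] -> ideal_height P 1.
Proof.
move=> pP P0; split.
  exists P; split=> //; split=> //; split.
    by exists (fun i => if i == 0%N then [set 0] else P); split=> //; apply: prime_chain01.
  move=> p [|[|m]] // [pr ch] pm; exfalso.
  have [pmP nPpm] : p m.+1 `<` P by rewrite -pm; apply: ch.
  apply: nPpm; apply: dim_le1_maximal pmP => //; first exact: pr.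
  case: (ch m (leqW (ltnSn m))) => _ npm0 pm1; apply: npm0; rewrite pm1.
  by move=> x ->; apply: ideal0; apply: prime_ideal; apply: pr; apply: leqW.
move=> P' m pP' PP' [_ Hm].
apply: (Hm (fun i => if i == 0%N then [set 0] else P') 1%N) => //.
apply: prime_chain01 => //.
have [x Px x0] := (ideal_neq0P (prime_ideal pP)).1 P0.
by apply/(ideal_neq0P (prime_ideal pP')); exists x => //; apply: PP'.
Qed.

Lemma dim_le1_iexp_subset P L k : is_prime_ideal P -> P <> [set 0] ->
  is_ideal L -> ~ L 1 -> iexp P k `<=` L -> L `<=` P.
Proof.
move=> pP P0 iL nL1 PkL; have [M pM LM] := exists_prime_above iL nL1.
have PM : P `<=` M by apply: (prime_iexp_subset (n := k)) => //; apply: subset_trans PkL LM.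
exact: subset_trans LM (dim_le1_maximal pP P0 pM PM).
Qed.

Lemma dim_le1_principal_power P t m : is_prime_ideal P -> P <> [set 0] ->
  invertible P -> P t -> iexp P m `<=` pideal t -> principal_power P.
Proof.
move=> pP P0 vP Pt; have iP := prime_ideal pP.
elim: m => [|m IH] Pmt.
  have [r t1] := Pmt 1 I; exfalso; apply: (prime_proper pP).
  by rewrite t1; apply: idealMr.
have iPm := ideal_iexp m.+1 iP; pose J := icolon (iexp P m.+1) t.
have iJ : is_ideal J by apply: ideal_icolon.
have PmJ : iexp P m.+1 = iscale t J.
  apply/seteqP; split=> [z Pz | _ [y [Jy ->]] //].
  by have [r zr] := Pmt z Pz; exists r; split=> //; rewrite /J /icolon /= -zr.
have [J1|nJ1] := pselect (J 1).
  exists m.+1; split=> //; exists t.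
  by rewrite PmJ (ideal1_setT iJ J1) -imul_pideal // imulT //; apply: ideal_pideal.
have JP : J `<=` P by apply: dim_le1_iexp_subset nJ1 _ => //; apply: subset_icolon.
apply: IH; apply: (invertible_cancel iP vP); [exact: ideal_iexp | exact: ideal_pideal |].
rewrite -iexpS PmJ imulC imul_pideal // => _ [y [Jy ->]].
by exists y; split=> //; apply: JP.
Qed.


End DimensionOne.

Lemma map_pair_image (A B C D : eqType) (f : A -> C) (g : B -> D)
    (M : set A) (N : set B) (l : seq (C * D)) :
  (forall p, p \in l -> (f @` M) p.1 /\ (g @` N) p.2) ->
  exists2 l' : seq (A * B), forall q, q \in l' -> M q.1 /\ N q.2 &
    l = [seq (f q.1, g q.2) | q <- l'].
Proof.
elim: l => [|p l IH] lMN; first by exists [::].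
have [|l' l'MN ->] := IH; first by move=> q ql; apply: lMN; rewrite inE ql orbT.
have [[x Mx fx] [y Ny gy]] := lMN p (mem_head _ _).
exists ((x, y) :: l') => [q | ]; first by rewrite inE => /orP [/eqP -> | /l'MN].
by rewrite /= fx gy; case: p {lMN fx gy}.
Qed.

Section FractionalIdeals.
Variable R : idomainType.
Local Notation K := {fraction R}.
Local Notation tof := (@FracField.tofrac R).
Implicit Types (I J : set R) (M N : set K) (x y : K).

Lemma tofrac_inj : injective tof.
Proof. by move=> a b /eqP; rewrite tofrac_eq => /eqP. Qed.

Lemma tofrac_image_inj I J : tof @` I = tof @` J -> I = J.
Proof.
move=> IJ; apply/seteqP; split=> a Ia.
  by have [b Jb /tofrac_inj <-] : (tof @` J) (tof a) by rewrite -IJ; exists a.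
by have [b Ib /tofrac_inj <-] : (tof @` I) (tof a) by rewrite IJ; exists a.
Qed.

Lemma tofrac_preimage M : M `<=` @Rimg R -> tof @` (tof @^-1` M) = M.
Proof.
move=> MR; apply/seteqP; split; first exact: image_preimage_subset.
by move=> x /[dup] /MR [a _ <-] Ma; exists a.
Qed.

Lemma Rsubmodule_tofrac I : is_ideal I -> Rsubmodule (tof @` I).
Proof.
move=> iI; split; first by exists 0; [apply: ideal0 | rewrite tofrac0].
split; first by move=> _ _ [a Ia <-] [b Ib <-]; exists (a + b); rewrite ?tofracD //;
  apply: idealD.
by move=> r _ [a Ia <-]; exists (r * a); [apply: idealMl | rewrite tofracM].
Qed.

Lemma ideal_preimage_tofrac M : Rsubmodule M -> is_ideal (tof @^-1` M).
Proof.
case=> M0 [MD MM]; split; first by rewrite /preimage /= tofrac0.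
split=> [a b Ma Mb | r a Ma]; rewrite /preimage /= ?tofracD ?tofracM;
  [exact: MD | exact: MM].
Qed.

Lemma mprodP M N z : mprod M N z <-> exists l : seq (K * K),
  (forall p, p \in l -> M p.1 /\ N p.2) /\ z = \sum_(p <- l) p.1 * p.2.
Proof.
split=> [[n [a [b [abMN ->]]]] | [l [lMN ->]]].
  exists [seq (a i, b i) | i <- index_enum 'I_n]; rewrite big_map; split=> //.
  by move=> p /mapP [i _ ->]; apply: abMN.
exists (size l), (fun i => (nth (0, 0) l i).1), (fun i => (nth (0, 0) l i).2).
split; first by move=> i; apply: lMN; apply: mem_nth.
by rewrite (big_nth (0, 0)) big_mkord.
Qed.

Lemma mem_mprod M N x y : M x -> N y -> mprod M N (x * y).
Proof.
move=> Mx Ny; apply/mprodP; exists [:: (x, y)]; rewrite big_seq1; split=> //.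
by move=> p; rewrite inE => /eqP ->.
Qed.

Lemma mprodC M N : mprod M N = mprod N M.
Proof.
suff sub M' N' : mprod M' N' `<=` mprod N' M' by apply/seteqP; split; apply: sub.
move=> z /mprodP [l [lMN ->]]; apply/mprodP; exists [seq (p.2, p.1) | p <- l].
rewrite big_map; split; last by apply: eq_bigr => p _; rewrite mulrC.
by move=> _ /mapP [p /lMN [? ?] ->].
Qed.

Lemma mprod_eq_Rimg_neq0 M N : mprod M N = @Rimg R -> exists2 x, M x & x != 0.
Proof.
move=> MNR; have /mprodP [l [lMN l1]] : mprod M N 1.
  by rewrite MNR; exists 1; rewrite ?tofrac1.
apply: contrapT => /forall2NP M0.
suff : \sum_(p <- l) p.1 * p.2 = 0 by rewrite -l1 => /eqP; rewrite oner_eq0.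
rewrite big_seq big1 // => p /lMN [Mp _]; have [//|/negP] := M0 p.1.
by rewrite negbK => /eqP ->; rewrite mul0r.
Qed.

Lemma mprod_tofrac I J : mprod (tof @` I) (tof @` J) = tof @` (imul I J).
Proof.
apply/seteqP; split=> z.
  case/mprodP => l [/map_pair_image [l' l'IJ ->] ->].
  exists (\sum_(q <- l') q.1 * q.2); first by exists l'.
  by rewrite rmorph_sum big_map; apply: eq_bigr => q _; rewrite rmorphM.
case=> _ [l [lIJ ->]] <-; apply/mprodP; exists [seq (tof q.1, tof q.2) | q <- l].
split; last by rewrite rmorph_sum big_map; apply: eq_bigr => q _; rewrite rmorphM.
by move=> _ /mapP [q /lIJ [Iq Jq] ->]; split; [exists q.1 | exists q.2].
Qed.

Lemma mpow_tofrac I n : is_ideal I -> mpow (tof @` I) n = tof @` (iexp I n.+1).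
Proof.
move=> iI; elim: n => [|n IH]; first by rewrite iexp1.
by rewrite /mpow iterS -/(mpow _ _) IH mprod_tofrac.
Qed.

Definition fscale x M : set K := [set x * m | m in M].

Lemma fscaleA x y M : fscale x (fscale y M) = fscale (x * y) M.
Proof.
apply/seteqP; split=> z; first by case=> _ [m Mm <-] <-; exists m; rewrite ?mulrA.
by case=> m Mm <-; exists (y * m); [exists m | rewrite mulrA].
Qed.

Lemma fscale1 M : fscale 1 M = M.
Proof.
apply/seteqP; split=> z; first by case=> m Mm <-; rewrite mul1r.
by move=> Mz; exists z; rewrite ?mul1r.
Qed.

Lemma fscaleK x M : x != 0 -> fscale x^-1 (fscale x M) = M.
Proof. by move=> x0; rewrite fscaleA mulVf // fscale1. Qed.

Lemma Rsubmodule_fscale x M : Rsubmodule M -> Rsubmodule (fscale x M).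
Proof.
case=> M0 [MD MM]; split; first by exists 0; rewrite ?mulr0.
split; first by move=> _ _ [a Ma <-] [b Mb <-]; exists (a + b); rewrite ?mulrDr //;
  apply: MD.
by move=> r _ [a Ma <-]; exists (tof r * a); [apply: MM | rewrite mulrCA].
Qed.

Lemma mprod_fscale x y M N : mprod (fscale x M) (fscale y N) = fscale (x * y) (mprod M N).
Proof.
apply/seteqP; split=> z.
  case/mprodP => l [/map_pair_image [l' l'MN ->] ->].
  exists (\sum_(q <- l') q.1 * q.2); first by apply/mprodP; exists l'.
  by rewrite big_map mulr_sumr; apply: eq_bigr => q _ /=; ring.
case=> _ /mprodP [l [lMN ->]] <-; apply/mprodP.
exists [seq (x * q.1, y * q.2) | q <- l]; split.
  by move=> _ /mapP [q /lMN [Mq Nq] ->]; split; [exists q.1 | exists q.2].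
by rewrite big_map mulr_sumr; apply: eq_bigr => q _ /=; ring.
Qed.

Lemma mprod_fscaler x M N : mprod M (fscale x N) = fscale x (mprod M N).
Proof. by rewrite -[M in LHS]fscale1 mprod_fscale mul1r. Qed.

Lemma mpow_fscale x M n : mpow (fscale x M) n = fscale (x ^+ n.+1) (mpow M n).
Proof.
elim: n => [|n IH]; first by rewrite expr1.
by rewrite /mpow !iterS -!/(mpow _ _) IH mprod_fscale -exprS.
Qed.

Lemma fscale_Rimg x : fscale x (@Rimg R) = [set x * tof r | r in [set: R]].
Proof.
apply/seteqP; split=> z; first by case=> _ [r _ <-] <-; exists r.
by case=> r _ <-; exists (tof r) => //; exists r.
Qed.

Lemma tofrac_pideal d : tof @` pideal d = fscale (tof d) (@Rimg R).
Proof.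
rewrite fscale_Rimg; apply/seteqP; split=> z.
  by case=> _ [r ->] <-; exists r; rewrite ?tofracM.
by case=> r _ <-; exists (d * r); [apply: pidealMr | rewrite tofracM].
Qed.

Lemma invertible_fracP I : is_ideal I -> invertible_ideal I <-> invertible I.
Proof.
move=> iI; split=> [[_ [N [sN IN]]] | [J [iJ [d [d0 IJd]]]]].
  have [_ [b Ib <-] b0] := mprod_eq_Rimg_neq0 IN.
  rewrite tofrac_eq0 in b0.
  have bNR : fscale (tof b) N `<=` @Rimg R.
    by move=> _ [n Nn <-]; rewrite -IN; apply: mem_mprod => //; exists b.
  exists (tof @^-1` fscale (tof b) N); split.
    by apply: ideal_preimage_tofrac; apply: Rsubmodule_fscale.
  exists b; split=> //; apply: tofrac_image_inj.
  by rewrite -mprod_tofrac tofrac_preimage // mprod_fscaler IN tofrac_pideal.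
split; first exact: Rsubmodule_tofrac.
exists (fscale (tof d)^-1 (tof @` J)); split.
  by apply: Rsubmodule_fscale; apply: Rsubmodule_tofrac.
rewrite mprod_fscaler mprod_tofrac IJd tofrac_pideal fscaleK //.
by rewrite tofrac_eq0.
Qed.

Lemma invertible_frac_fscale x M : x != 0 -> invertible_frac M ->
  invertible_frac (fscale x M).
Proof.
move=> x0 [sM [N [sN MN]]]; split; first exact: Rsubmodule_fscale.
exists (fscale x^-1 N); split; first exact: Rsubmodule_fscale.
by rewrite mprod_fscale mulfV // fscale1.
Qed.

Lemma class_group_torsionP :
  class_group_torsion R <-> forall I, is_ideal I -> invertible I -> principal_power I.
Proof.
split=> [T I iI /(invertible_fracP iI) /T [n [x [x0 Inx]]] | PP M vM].
  rewrite mpow_tofrac // -fscale_Rimg in Inx.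
  have [t _ tx] : (tof @` iexp I n.+1) x.
    by rewrite Inx; exists 1; [exists 1; rewrite ?tofrac1 | rewrite mulr1].
  exists n.+1; split=> //; exists t; apply: tofrac_image_inj.
  by rewrite Inx tofrac_pideal tx.
have [sM [N [sN MN]]] := vM.
have [n Nn n0] := mprod_eq_Rimg_neq0 (etrans (mprodC N M) MN).
have nMR : fscale n M `<=` @Rimg R.
  by move=> _ [m Mm <-]; rewrite -MN mulrC; apply: mem_mprod.
have iI : is_ideal (tof @^-1` fscale n M).
  by apply: ideal_preimage_tofrac; apply: Rsubmodule_fscale.
have vI : invertible (tof @^-1` fscale n M).
  by apply/(invertible_fracP iI); rewrite /invertible_ideal tofrac_preimage //;
    apply: invertible_frac_fscale.
have [[|k] [// _ [d Ikd]]] := PP _ iI vI.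
have d0 : d != 0 by apply: iexp_pideal_neq0 Ikd => //; apply: invertible_neq0.
exists k, (n ^- k.+1 * tof d); split.
  by rewrite mulf_neq0 ?invr_eq0 ?expf_neq0 ?tofrac_eq0.
rewrite -fscale_Rimg -fscaleA -tofrac_pideal -Ikd -mpow_tofrac // tofrac_preimage //.
by rewrite mpow_fscale fscaleK // expf_neq0.
Qed.

End FractionalIdeals.

Section RadicallyFinitePrime.
Variable R : idomainType.
Implicit Types (P : set R).

Definition radically_finite_at P :=
  radically_perfect P /\ exists n, ideal_height P n /\
    exists A, maximal_member (gen_with_radical n P) A /\ chains_between_finite A P.

Lemma radically_finite_at0 : radically_finite_at [set 0].
Proof.
have rad0 : rad [set 0 : R] = [set 0] by apply/rad_prime/prime0.
split.
  exists 0%N; split; first exact: ideal_height0.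
  split; first by exists [::]; rewrite span_nil.
  split=> // _; exists 0; split; last by rewrite span1 pideal0.
  by exists 1; rewrite oner_neq0 mul0r.
exists 0%N; split; first exact: ideal_height0.
exists [set 0]; split.
  split; first by exists [::]; rewrite span_nil.
  by move=> B [s [/size0nil -> [-> _]]] _; rewrite span_nil.
move=> C CA _; apply: (@sub_finite_set _ _ [set [set 0]]); last exact: finite_set1.
move=> J /CA [iJ [_ J0]]; apply/seteqP; split=> // x ->; exact: ideal0.
Qed.

Lemma radically_perfect_height1 P t : is_prime_ideal P -> P <> [set 0] ->
  ideal_height P 1 -> rad (pideal t) = P -> radically_perfect P.
Proof.
move=> pP P0 hP radt; exists 1%N; split=> //.
split; first by exists [:: t]; rewrite span1 radt rad_prime.
split=> // [[|//]]; rewrite span_nil (rad_prime pP) (rad_prime (@prime0 R)) => P_0.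
by case: P0.
Qed.

End RadicallyFinitePrime.

Section Dedekind.
Variable R : idomainType.
Implicit Types (I J L P Q : set R).
Hypothesis dedekind : forall I, is_ideal I -> I <> [set 0] -> invertible I.

Lemma dedekind_dim_le1 : dim_le1 R.
Proof.
move=> Q P pQ pP Q0 [QP nPQ].
have iP := prime_ideal pP; have iQ := prime_ideal pQ.
have P0 := neq0_subset iQ Q0 QP.
have [D iD PDQ] := invertible_dvd iP (dedekind iP P0) iQ QP.
have [p [Pp nQp]] := nonsubset nPQ.
have DQ : D `<=` Q.
  move=> x Dx; have : Q (p * x) by rewrite -PDQ; apply: mem_imul.
  by case/(prime_mul pQ).
have QPQ : imul Q P = imul Q setT.
  rewrite imulT //; apply/seteqP; split; first exact: imul_subl.
  by rewrite imulC -{1}PDQ; apply: imulS.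
have PT : P = setT by apply: (invertible_inj iQ (dedekind iQ Q0)).
by apply: (prime_proper pP); rewrite PT.
Qed.

Lemma dedekind_iexp_between P k J : is_prime_ideal P -> P <> [set 0] -> is_ideal J ->
  (0 < k)%N -> iexp P k `<=` J -> J `<=` P ->
  exists i, [/\ (0 < i)%N, (i <= k)%N & J = iexp P i].
Proof.
move=> pP P0 iJ; have iP := prime_ideal pP; have vP := dedekind iP P0.
elim: k J iJ => // k IH J iJ _ PkJ JP.
case: k IH PkJ => [|k] IH PkJ.
  by exists 1%N; split=> //; rewrite iexp1 // in PkJ *; apply/seteqP.
have [L iL PLJ] := invertible_dvd iP vP iJ JP.
have [L1|nL1] := pselect (L 1).
  by exists 1%N; split=> //; rewrite -PLJ (ideal1_setT iL L1) imulT // iexp1.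
have PkL : iexp P k.+1 `<=` L.
  by apply: (invertible_cancel iP vP) => //; [apply: ideal_iexp | rewrite PLJ].
have LP := dim_le1_iexp_subset dedekind_dim_le1 pP P0 iL nL1 PkL.
have [i [i0 ik Li]] := IH L iL isT PkL LP.
by exists i.+1; split=> //; rewrite -PLJ Li.
Qed.

Hypothesis torsion : forall I, is_ideal I -> invertible I -> principal_power I.

Lemma dedekind_radically_finite_at P : is_prime_ideal P -> P <> [set 0] ->
  radically_finite_at P.
Proof.
move=> pP P0; have iP := prime_ideal pP; have vP := dedekind iP P0.
have hP := dim_le1_height dedekind_dim_le1 pP P0.
have PPj : exists j, `[< (0 < j)%N /\ exists d, iexp P j = pideal d >].
  by have [k kP] := torsion iP vP; exists k; apply/asboolP.
case: (ex_minnP PPj) => j /asboolP [j0 [t Pjt]] jmin.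
have radt : rad (pideal t) = P by rewrite -Pjt rad_iexp.
split; first exact: radically_perfect_height1 pP P0 hP radt.
exists 1%N; split=> //; exists (pideal t); split.
  split; first by exists [:: t]; rewrite span1.
  move=> _ [s [sz [-> radb]]] tb.
  case: s sz radb tb => [|b [|]] // _; rewrite span1 => radb tb.
  have bP : pideal b `<=` P by rewrite -radb; apply: subset_rad.
  have Pjb : iexp P j `<=` pideal b by rewrite Pjt.
  have [i [i0 ij bPi]] := dedekind_iexp_between pP P0 (ideal_pideal b) j0 Pjb bP.
  have /jmin ji : `[< (0 < i)%N /\ exists d, iexp P i = pideal d >].
    by apply/asboolP; split=> //; exists b.
  by rewrite bPi -Pjt; congr iexp; apply/eqP; rewrite eqn_leq ij ji.
move=> C CA _; apply: (@sub_finite_set _ _ (iexp P @` `I_j.+1)).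
  move=> J /CA [iJ [tJ JP]].
  have PjJ : iexp P j `<=` J by rewrite Pjt.
  have [i [_ ij ->]] := dedekind_iexp_between pP P0 iJ j0 PjJ JP.
  by exists i.
by apply: finite_image; apply: finite_II.
Qed.

End Dedekind.

Section PrincipalPowers.
Variable R : idomainType.
Implicit Types (I J L M P : set R).

Lemma principal_power_maximal_prime M : is_ideal M -> M <> [set 0] ->
  ~ principal_power M -> (forall B, M `<` B -> is_ideal B -> principal_power B) ->
  is_prime_ideal M.
Proof.
move=> iM M0 nPM PPup; split=> //; split.
  by move=> M1; apply: nPM; rewrite (ideal1_setT iM M1); apply: principal_powerT.
move=> a b Mab; apply: contrapT => /not_orP [Ma Mb]; apply: nPM.
have iJ := ideal_iadjoin a iM; have iL : is_ideal (icolon M a) by apply: ideal_icolon.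
have PPJ : principal_power (iadjoin M a).
  apply: PPup iJ; split; first exact: subset_iadjoin.
  by move/(_ a (iadjoin_id a iM)).
have PPL : principal_power (icolon M a).
  by apply: PPup iL; split; [apply: subset_icolon | move/(_ b Mab)].
have vJ := principal_power_invertible iJ (neq0_subset iM M0 (@subset_iadjoin _ M a)) PPJ.
have [D iD JDM] := invertible_dvd iJ vJ iM (@subset_iadjoin _ M a).
suff -> : M = imul (iadjoin M a) (icolon M a) by apply: principal_power_imul.
apply/seteqP; split.
  rewrite -{1}JDM; apply: imulS => // x Dx; rewrite /icolon /= -JDM.
  by apply: mem_imul => //; apply: iadjoin_id.
apply: imul_least => // _ x [m [r [Mm ->]]] Max.
by rewrite mulrDl mulrAC; apply: (idealD iM); apply: idealMr.
Qed.

Lemma principal_power_of_primes :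
  (forall P, is_prime_ideal P -> P <> [set 0] -> principal_power P) ->
  forall I, is_ideal I -> I <> [set 0] -> principal_power I.
Proof.
move=> PPprime I iI I0; apply: contrapT => nPI.
pose S := [set X : set R | is_ideal X /\ X <> [set 0] /\ ~ principal_power X].
have [M [[iM [M0 nPM]] Mmax]] : exists M, S M /\ forall B, M `<` B -> ~ S B.
  apply: (@Zorn_bigcup_from _ S I); [by [] | by exists 0; apply: ideal0 |].
  move=> F FS Fne Ftot; have Fi X : F X -> is_ideal X by move/FS => [].
  have iU := ideal_bigcup_chain Fi Fne Ftot.
  have U0 : \bigcup_(X in F) X <> [set 0].
    have [X FX] := Fne; have [iX [X0 _]] := FS X FX.
    by apply: neq0_subset iX X0 _; apply: bigcup_sup.
  split=> //; split=> // PU.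
  have vU := principal_power_invertible iU U0 PU.
  have [X FX XU] := invertible_bigcup_chain Fi Fne Ftot vU.
  by have [_ [_]] := FS X FX; rewrite XU.
apply/nPM/PPprime => //; apply: principal_power_maximal_prime => // B MB iB.
apply: contrapT => nPB; apply: (Mmax B MB); split=> //; split=> //.
exact: neq0_subset iM M0 (properW MB).
Qed.

End PrincipalPowers.

Section Prufer.
Variable R : idomainType.
Implicit Types (I J L P Q : set R) (a b c t u x y : R).
Hypothesis prufer : prufer_domain R.

Lemma prufer_span_invertible (s : seq R) : span s <> [set 0] -> invertible (span s).
Proof.
move=> s0; apply/(invertible_fracP (ideal_span s)).
exact: prufer (ideal_span s) s0 (ex_intro _ s erefl).
Qed.

Lemma prufer_pair a c : a != 0 -> exists e, pideal c (e * a) /\ pideal a ((1 - e) * c).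
Proof.
move=> a0; have ac0 : span [:: a; c] <> [set 0].
  by apply/(ideal_neq0P (ideal_span _)); exists a => //; apply: mem_span; rewrite mem_head.
have [J [iJ [d [d0 acJd]]]] := prufer_span_invertible ac0.
(* Writing d = a u + c v with u, v in J, the witness is e = c v / d. *)
rewrite span2 in acJd.
have Jd x y v : J v -> pideal d ((a * x + c * y) * v).
  move=> Jv; rewrite -acJd; apply: mem_imul => //.
  by exists (a * x), y; split; first exact: pidealMr.
have dacJ : imul (iadjoin (pideal a) c) J d by rewrite acJd; apply: pideal_id.
have [u [v [Ju [Jv duv]]]] := imul_iadjoin_pideal iJ dacJ.
have [[al Eal] [ga Ega]] := (Jd 1 0 v Jv, Jd 0 1 v Jv).
have [[de Ede] [be Ebe]] := (Jd 1 0 u Ju, Jd 0 1 u Ju).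
rewrite !mulr0 !addr0 !add0r !mulr1 in Eal Ega Ede Ebe.
have de_ga : de + ga = 1 by apply: (mulfI d0); rewrite mulrDr -Ede -Ega mulr1 duv.
exists ga; split.
  by exists al; apply: (mulfI d0); rewrite mulrA -Ega -mulrA (mulrC v a) Eal; ring.
exists be; apply: (mulfI d0).
by rewrite -de_ga addrK [LHS]mulrA -Ede -mulrA (mulrC u c) Ebe; ring.
Qed.

Lemma prufer_exp_dvd_mul Q P c y k : is_prime_ideal Q -> is_prime_ideal P -> Q `<=` P ->
  ~ Q c -> Q y -> exists w z, ~ P w /\ Q z /\ c ^+ k * z = w * y.
Proof.
move=> pQ pP QP Qc; have iQ := prime_ideal pQ.
have step z : Q z -> exists e z', ~ P e /\ Q z' /\ c * z' = e * z.
  move=> Qz; have [->|z0] := eqVneq z 0.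
    by exists 1, 0; rewrite !mulr0; split; [apply: prime_proper | split; first apply: ideal0].
  have [e [[z' ez] [r ecr]]] := prufer_pair c z0; exists e, z'; split.
    move=> Pe; have /(prime_mul pQ) [Q1e | //] : Q ((1 - e) * c) by rewrite ecr; apply: idealMr.
    exact: prime_1B pP Pe (QP _ Q1e).
  have /(prime_mul pQ) [// | Qz'] : Q (c * z') by rewrite -ez; apply: idealMl.
  by split.
elim: k y => [|k IH] y Qy; first by exists 1, y; rewrite expr0 mul1r;
  split; [apply: prime_proper | split].
have [w [z [Pw [Qz ckz]]]] := IH y Qy; have [e [z' [Pe [Qz' cz']]]] := step z Qz.
exists (e * w), z'; split; first exact: prime_mulN.
by split=> //; rewrite exprSr -mulrA cz' mulrCA ckz mulrA.
Qed.

Hypothesis radfin : radically_finite R.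

Lemma prufer_dim_le1 : dim_le1 R.
Proof.
move=> Q P pQ pP Q0 [QP nPQ]; have iQ := prime_ideal pQ.
have [_ [n [_ [A [[[s [_ [As radA]]] _] chA]]]]] := radfin pQ.
have [c [Pc Qc]] := nonsubset nPQ.
have iA : is_ideal A by rewrite As; apply: ideal_span.
have AQ : A `<=` Q by rewrite -radA; apply: subset_rad.
have A0 : A <> [set 0].
  have [q Qq q0] := (ideal_neq0P iQ).1 Q0; move: Qq; rewrite -radA => -[m Aqm].
  by apply/(ideal_neq0P iA); exists (q ^+ m); rewrite ?expf_neq0.
have vA : invertible A by rewrite As; apply: prufer_span_invertible; rewrite -As.
have [j Aj] := icolon_exp_stable iA pQ AQ Qc chA.
have [t [Pt tA]] : exists t, ~ P t /\ forall a, a \in s -> iscale c A (t * a).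
  apply: prime_common_multiplier => //; first exact: ideal_iscale.
  move=> a sa; have Aa : A a by rewrite As; apply: mem_span.
  have [w [z [Pw [_ cjz]]]] := prufer_exp_dvd_mul j.+1 pQ pP QP Qc (AQ a Aa).
  exists w; split=> //; exists (c ^+ j * z); rewrite mulrA -exprS cjz; split=> //.
  by apply: Aj; rewrite /icolon /= cjz; apply: idealMl.
have tAcA : imul A (pideal t) `<=` imul A (pideal c).
  rewrite !(imulC A) !imul_pideal // => _ [x [Ax ->]]; move: x Ax; rewrite {1}As.
  by apply: span_least => //; apply/ideal_icolon/ideal_iscale.
have [r tcr] := invertible_cancel iA vA (ideal_pideal t) (ideal_pideal c) tAcA (pideal_id t).
by apply: Pt; rewrite tcr; apply: idealMr => //; apply: prime_ideal.
Qed.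

End Prufer.

Section PruferPrime.
Variables (R : idomainType) (P : set R).
Hypotheses (prufer : prufer_domain R) (radfin : radically_finite R).
Hypotheses (pP : is_prime_ideal P) (P0 : P <> [set 0]).
Implicit Types (a b e t u x y : R).

Let dim1 := prufer_dim_le1 prufer radfin.

Lemma prufer_prime_generator :
  exists t, rad (pideal t) = P /\ chains_between_finite (pideal t) P.
Proof.
have [_ [n [hn [A [[[s [sz [As radA]]] _] chA]]]]] := radfin pP.
move: sz; rewrite (ideal_height_uniq hn (dim_le1_height dim1 pP P0)).
by case: s As => [|t [|]] // As _; exists t; rewrite -span1 -As.
Qed.

Variable t : R.
Hypothesis radt : rad (pideal t) = P.

Lemma iadjoin_pideal_coprime u : ~ P u -> iadjoin (pideal t) u 1.
Proof.
move=> Pu; apply: contrapT => ntu1.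
have [M pM tuM] := exists_prime_above (ideal_iadjoin u (ideal_pideal t)) ntu1.
have PM : P `<=` M.
  rewrite -radt; apply: rad_subset_prime => //.
  by apply: subset_trans tuM; apply: subset_iadjoin.
by apply/Pu/(dim_le1_maximal dim1 pP P0 pM PM)/tuM/iadjoin_id/ideal_pideal.
Qed.

Lemma iadjoin_pideal_subset a b e z : ~ P e -> e * a = b * z ->
  iadjoin (pideal t) a `<=` iadjoin (pideal t) b.
Proof.
move=> Pe eab; have [_ [r [[c ->] tcer]]] := iadjoin_pideal_coprime Pe.
apply: iadjoin_least; [exact/ideal_iadjoin/ideal_pideal | exact: subset_iadjoin |].
exists (t * (c * a)), (z * r); split; first exact: pidealMr.
have -> : b * (z * r) = e * a * r by rewrite eab mulrA.
by rewrite -{1}[a]mulr1 tcer; ring.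
Qed.

Lemma iadjoin_pideal_total x y : P x -> P y ->
  iadjoin (pideal t) x `<=` iadjoin (pideal t) y \/
  iadjoin (pideal t) y `<=` iadjoin (pideal t) x.
Proof.
move=> Px Py; have [->|x0] := eqVneq x 0.
  left; apply: iadjoin_least; [exact/ideal_iadjoin/ideal_pideal | exact: subset_iadjoin |].
  by apply: ideal0; apply: ideal_iadjoin; apply: ideal_pideal.
have [e [[z exyz] [w eyxw]]] := prufer_pair prufer y x0.
have [Pe|Pe] := pselect (P e); last by left; apply: iadjoin_pideal_subset Pe exyz.
by right; apply: (iadjoin_pideal_subset (prime_1B pP Pe) eyxw).
Qed.

Hypothesis chain_t : chains_between_finite (pideal t) P.

Lemma prufer_prime_iadjoin : exists2 x, P x & P = iadjoin (pideal t) x.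
Proof.
have iP := prime_ideal pP; have tP : pideal t `<=` P by rewrite -radt; apply: subset_rad.
have tPx x : P x -> iadjoin (pideal t) x `<=` P by move=> Px; apply: iadjoin_least.
apply: contrapT => /forall2NP noeq.
have next x : exists y, P x -> P y /\ iadjoin (pideal t) x `<` iadjoin (pideal t) y.
  have [Px|] := pselect (P x); last by exists x.
  have [/(_ Px)|nPx] := noeq x; first by [].
  have [y [Py ny]] : exists y, P y /\ ~ iadjoin (pideal t) x y.
    apply: contrapT => /forallNP Pxt; apply: nPx; apply/seteqP; split; last exact: tPx.
    by move=> y Py; have /not_andP [|/contrapT] := Pxt y.
  exists y => _; split=> //; case: (iadjoin_pideal_total Px Py) => [xy | yx].
    by split=> // /(_ y (iadjoin_id y (ideal_pideal t))).
  by exfalso; apply/ny/yx/iadjoin_id/ideal_pideal.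
have [g gP] := choice next; pose s n := iter n g t.
have Ps n : P (s n) by elim: n => [|n IH]; [apply/tP/pideal_id | have [] := gP _ IH].
apply: (@strict_chain_infinite _ (fun n => iadjoin (pideal t) (s n))).
  by move=> n; have [] := gP _ (Ps n).
apply: chain_t.
  move=> _ [n _ <-]; split; first exact/ideal_iadjoin/ideal_pideal.
  by split; [apply: subset_iadjoin | apply: tPx].
by move=> _ _ [i _ <-] [j _ <-]; apply: iadjoin_pideal_total.
Qed.

Lemma prufer_prime_principal_power : principal_power P.
Proof.
have [x Px Ptx] := prufer_prime_iadjoin.
have vP : invertible P.
  by rewrite Ptx -span2; apply: prufer_span_invertible; rewrite // span2 -Ptx.
have [n tn] : rad (pideal t) x by rewrite radt.
have Pt : P t by rewrite -radt; apply/subset_rad/pideal_id.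
apply: (dim_le1_principal_power (m := n.+1) dim1 pP P0 vP Pt).
have Pn : iexp P n.+1 `<=` iadjoin (pideal t) (x ^+ n.+1).
  by rewrite {1}Ptx; apply: iexp_iadjoin_subset.
apply: (subset_trans Pn); apply: iadjoin_least; [exact: ideal_pideal | by [] |].
by rewrite exprS; apply: idealMl => //; apply: ideal_pideal.
Qed.

End PruferPrime.

Lemma prufer_principal_power (R : idomainType) : prufer_domain R -> radically_finite R ->
  forall I : set R, is_ideal I -> I <> [set 0] -> principal_power I.
Proof.
move=> prufer radfin; apply: principal_power_of_primes => P pP P0.
have [t [radt chain_t]] := prufer_prime_generator prufer radfin pP P0.
exact: prufer_prime_principal_power radt chain_t.
Qed.

Theorem corollary2p3 (R : idomainType) :
  prufer_domain R -> finite_krull_dim R ->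
  (radically_finite R <-> dedekind_domain R /\ class_group_torsion R).
Proof.
move=> prufer _; split=> [radfin | [dedekind /class_group_torsionP torsion]].
  have PP := prufer_principal_power prufer radfin.
  split=> [I iI I0 | ]; last first.
    by apply/class_group_torsionP => I iI vI; apply: PP iI (invertible_neq0 iI vI).
  by apply/(invertible_fracP iI); apply: principal_power_invertible iI I0 (PP I iI I0).
have dedekindR (I : set R) : is_ideal I -> I <> [set 0] -> invertible I.
  by move=> iI I0; apply/(invertible_fracP iI); apply: dedekind.
move=> P pP; have [->|P0] := pselect (P = [set 0]); first exact: radically_finite_at0.
exact: dedekind_radically_finite_at.
Qed.
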